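(* Let $n>s\geq 1$ be integers and let ${\bm r}=(r_0,\dots,r_s)\in\mathbb{R}^{s+1}$ be such that $g_{\bm r}(x)=\sum_{k=0}^{s} r_k x^k$ is a separable polynomial of degree $s$ (so $r_s\neq 0$) with exactly $\gamma$ real roots ($0\le\gamma\le s$). For $t$ an indeterminate, let $f_{\bm r}(t;x)=x^n+t\,g_{\bm r}(x)\in\mathbb{R}(t)[x]$, and let $$P_{\bm r}(t)=\det M_n\big(f_{\bm r}(t;x),\,f'_{\bm r}(t;x)\big)\in\mathbb{R}[t],$$ where $f'_{\bm r}$ is the derivative with respect to $x$. Let $\alpha_{\bm r}=\max\{\alpha\in\mathbb{R}\mid P_{\bm r}(\alpha)=0\}$. Then for every real $\xi>\alpha_{\bm r}$, the number $N_{f_{\bm r}(\xi;x)}$ of distinct real roots of $f_{\bm r}(\xi;x)=x^n+\xi g_{\bm r}(x)$ equals $$N_{f_{\bm r}(\xi;x)}=\begin{cases}\gamma+1 & \text{if } n-s \text{ is odd},\\ \gamma & \text{if } n-s \text{ is even and } r_s>0,\\ \gamma+2 & \text{if } n-s \text{ is even and } r_s<0.\end{cases}$$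
   Context: Bezoutian: for polynomials $f_1,f_2$ over a field $F$ of characteristic $0$ and an integer $n\ge\max\{\deg f_1,\deg f_2\}$, write $\frac{f_1(x)f_2(y)-f_1(y)f_2(x)}{x-y}=\sum_{i,j=1}^n\alpha_{ij}x^{n-i}y^{n-j}\in F[x,y]$ and set $M_n(f_1,f_2)=(\alpha_{ij})_{1\le i,j\le n}$, a symmetric $n\times n$ matrix. For a real polynomial $h$, $N_h$ denotes the number of distinct real roots of $h$. Note $P_{\bm r}(0)=0$ since $f_{\bm r}(0;x)=x^n$. *)

From HB Require Import structures.
From mathcomp Require Import all_boot all_order all_algebra all_field.
Set Implicit Arguments. Unset Strict Implicit. Unset Printing Implicit Defensive.
Import Order.TTheory GRing.Theory Num.Theory.
Local Open Scope ring_scope.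

(* Bivariate polynomials: an element of {poly {poly R}} is read as a
   polynomial in y (outer variable) whose coefficients are polynomials in x
   (inner variable).  For f : {poly R}, f%:P is f(x) and f^:P is f(y). *)

(* (f1(x) f2(y) - f1(y) f2(x)) / (x - y); note x - y = -('X - ('X)%:P),
   and 'X - ('X)%:P is monic in y, so the division is exact. *)
Definition bezout_quot (R : idomainType) (f1 f2 : {poly R}) : {poly {poly R}} :=
  - ((f1%:P * f2^:P - f1^:P * f2%:P) %/ ('X - ('X)%:P)).

(* M_n(f1,f2) = (alpha_ij), alpha_ij = coefficient of x^(n-i) y^(n-j),
   1 <= i,j <= n; here indices i j : 'I_n stand for i+1, j+1. *)
Definition bezoutian (R : idomainType) (n : nat) (f1 f2 : {poly R}) : 'M[R]_n :=
  \matrix_(i < n, j < n) ((bezout_quot f1 f2)`_(n.-1 - j))`_(n.-1 - i).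

(* f_r(t;x) = x^n + t g_r(x), as a polynomial in x with coefficients in R[t]. *)
Definition f_r (R : idomainType) (n : nat) (g : {poly R}) : {poly {poly R}} :=
  'X^n + ('X)%:P * g^:P.

Definition P_r (R : idomainType) (n : nat) (g : {poly R}) : {poly R} :=
  \det (bezoutian n (f_r n g) (f_r n g)^`()).

Definition num_real_roots (R : idomainType) (h : {poly R}) (k : nat) : Prop :=
  exists s : seq R, [/\ uniq s, (forall x, root h x = (x \in s)) & size s = k].

From HB Require Import structures.
From mathcomp Require Import all_boot all_order all_algebra all_field.
From mathcomp Require Import zify ring lra polyrcf.
Set Implicit Arguments. Unset Strict Implicit. Unset Printing Implicit Defensive.
Import Order.TTheory GRing.Theory Num.Theory.
Local Open Scope ring_scope.

(* A common root of x^n + t g and its derivative makes the Bezoutian singular,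
   so P_r(t) = 0.  Hence for xi beyond the roots of P_r, F = x^n + xi g has only
   simple roots, and at each critical point c of x |-> -x^n/g(x) the value
   t = -c^n/g(c) is below xi.  The latter means that the Wronskian
   W = F' g - F g' = x^(n-1) (n g - x g') does not vanish where H = F g < 0.
   So the function equal to sg W where H < 0, and to 0 elsewhere, is constant
   between consecutive real roots of H and drops by [F(b) = 0] - [g(b) = 0]
   across a root b (the only common root is 0, and H > 0 around it).
   Telescoping, #roots F - #roots g is its value at -oo minus its value at +oo,
   i.e. [H < 0 at -oo] + [H < 0 at +oo], which is read off from the degrees and
   leading coefficients of H and W. *)

Lemma bezout_quotM (R : idomainType) (p q : {poly R}) :
  bezout_quot p q * ('X - ('X)%:P) = - (p%:P * q^:P - p^:P * q%:P).
Proof.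
rewrite /bezout_quot; set N := p%:P * q^:P - p^:P * q%:P.
have /factor_theorem[Q ->] : root N 'X.
  by rewrite /root !hornerE -!/(comp_poly _ _) !comp_polyXr mulrC subrr.
by rewrite Pdiv.IdomainMonic.mulpK ?monicXsubC // mulNr.
Qed.

Lemma size_bezout_quot (R : idomainType) (n : nat) (p q : {poly R}) :
  (size p <= n.+1)%N -> (size q <= n.+1)%N -> (size (bezout_quot p q) <= n)%N.
Proof.
move=> sp sq; have [->|Q0] := eqVneq (bezout_quot p q) 0; first by rewrite size_poly0.
have := size_Mmonic Q0 (monicXsubC ('X : {poly R})).
rewrite bezout_quotM size_polyN size_XsubC addn2 /= => eqN.
rewrite -ltnS -eqN (leq_trans (size_polyD _ _)) // geq_max size_polyN (mulrC p^:P).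
by rewrite !mul_polyC !(leq_trans (size_scale_leq _ _)) // size_map_polyC.
Qed.

Lemma map_poly_polyC_map (R S : nzRingType) (f : {rmorphism R -> S}) (p : {poly R}) :
  map_poly (map_poly f) p^:P = (map_poly f p)^:P.
Proof. by rewrite -!map_poly_comp; apply: eq_map_poly => x /=; rewrite map_polyC. Qed.

Lemma map_bezout_quot (R S : idomainType) (f : {rmorphism R -> S}) (p q : {poly R}) :
  map_poly (map_poly f) (bezout_quot p q) = bezout_quot (map_poly f p) (map_poly f q).
Proof.
have XY0 : 'X - ('X)%:P != 0 :> {poly {poly S}} by rewrite monic_neq0 ?monicXsubC.
apply: (mulIf XY0); rewrite bezout_quotM.
have <- : map_poly (map_poly f) ('X - ('X)%:P) = 'X - ('X)%:P.
  by rewrite rmorphB /= map_polyX map_polyC /= map_polyX.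
by rewrite -rmorphM bezout_quotM rmorphN rmorphB !rmorphM /= !map_polyC !map_poly_polyC_map.
Qed.

Lemma map_bezoutian (R S : idomainType) (f : {rmorphism R -> S}) (n : nat) (p q : {poly R}) :
  map_mx f (bezoutian n p q) = bezoutian n (map_poly f p) (map_poly f q).
Proof. by apply/matrixP => i j; rewrite !mxE -map_bezout_quot !coef_map. Qed.

(* The row vector v = (a^(n-1), ..., a, 1) is a nonzero left kernel vector of
   the transposed Bezoutian: v *m M^T lists the coefficients of
   (p(x) q(a) - p(a) q(x)) / (x - a), which vanishes. *)
Lemma det_bezoutian_eq0 (R : fieldType) (n : nat) (p q : {poly R}) (a : R) :
  (0 < n)%N -> (size p <= n.+1)%N -> (size q <= n.+1)%N ->
  root p a -> root q a -> \det (bezoutian n p q) = 0.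
Proof.
case: n => // n _ sp sq rp rq; set Q := bezout_quot p q.
have Qa : Q.[a%:P] = 0.
  have /eqP : Q.[a%:P] * (a%:P - 'X) = 0.
    have := congr1 (fun P => P.[a%:P]) (bezout_quotM p q).
    rewrite hornerM hornerXsubC => ->.
    by rewrite !hornerE !horner_map /= (rootP rp) (rootP rq) mulr0 mul0r subrr oppr0.
  by rewrite mulf_eq0 -opprB oppr_eq0 polyXsubC_eq0 orbF => /eqP.
rewrite -det_tr; apply/eqP/det0P; exists (\row_(j < n.+1) a ^+ (n - j)).
  apply/eqP => /matrixP /(_ 0 ord_max); rewrite !mxE subnn expr0 => /eqP.
  by rewrite oner_eq0.
apply/rowP => i; rewrite !mxE.
have := congr1 (fun P : {poly R} => P`_(n - i)) Qa.
rewrite (horner_coef_wide _ (size_bezout_quot sp sq)) coef_sum coef0 => Qa_i; apply: etrans Qa_i.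
rewrite (reindex_inj rev_ord_inj) /=; apply: eq_bigr => j _.
by rewrite !mxE /= -rmorphXn coefMC mulrC subSS subKn // -ltnS ltn_ord.
Qed.

Lemma horner_P_r (R : idomainType) (n : nat) (g : {poly R}) (t : R) :
  (P_r n g).[t] = \det (bezoutian n ('X^n + t *: g) ('X^n + t *: g)^`()).
Proof.
have ft : map_poly (horner_eval t) (f_r n g) = 'X^n + t *: g.
  rewrite /f_r rmorphD rmorphM /= map_polyXn map_polyC /= horner_evalE hornerX.
  rewrite -map_poly_comp (eq_map_poly (fun x => hornerC x t)) map_poly_id //.
  by rewrite mul_polyC.
by rewrite /P_r -horner_evalE -det_map_mx map_bezoutian -deriv_map ft.
Qed.

Lemma root_P_r (R : fieldType) (n : nat) (g : {poly R}) (t a : R) :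
  (0 < n)%N -> (size g <= n)%N ->
  root ('X^n + t *: g) a -> root ('X^n + t *: g)^`() a -> root (P_r n g) t.
Proof.
move=> n_gt0 sg rF rF'; set F := 'X^n + t *: g in rF rF'.
have sF : (size F <= n.+1)%N.
  rewrite (leq_trans (size_polyD _ _)) // geq_max size_polyXn leqnn /=.
  by rewrite (leq_trans (size_scale_leq _ _)) // (leq_trans sg).
have sF' : (size F^`() <= n.+1)%N.
  have [->|F0] := eqVneq F 0; first by rewrite deriv0 size_poly0.
  by rewrite (leq_trans _ sF) // ltnW // lt_size_deriv.
by rewrite /root horner_P_r (det_bezoutian_eq0 n_gt0 sF sF' rF rF').
Qed.

Section SimpleRootSign.
Variable R : rcfType.
Implicit Types (p : {poly R}) (u v y : R).

Lemma sgr_horner_right_simple_root p u y : u < y ->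
    {in `]u, y], forall z, ~~ root p z} -> root p u -> p^`().[u] != 0 ->
  Num.sg p.[y] = Num.sg p^`().[u].
Proof.
move=> uy noroot_uy rpu dpu.
have p0 : p != 0 by apply: contra_neq dpu => ->; rewrite deriv0 horner0.
have m_near : (u + next_root p u y) / 2 \in neighpr p u y.
  by rewrite /neighpr mid_in_itvoo // next_root_gt.
have next_le_y : next_root p u y <= y.
  by move: (next_root_in p u y); rewrite (max_idPl (ltW uy)) => /itvP ->.
rewrite -(sgp_rightNroot dpu) -sgp_right_deriv // -(sgr_neighpr m_near).
apply: (polyrN0_itv noroot_uy); rewrite in_itv /= ?lexx ?uy //.
move: m_near; rewrite /neighpr in_itv /= => /andP[-> m_lt_next].
exact: le_trans (ltW m_lt_next) next_le_y.
Qed.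

Lemma sgr_horner_left_simple_root p y v : y < v ->
    {in `[y, v[, forall z, ~~ root p z} -> root p v -> p^`().[v] != 0 ->
  Num.sg p.[y] = - Num.sg p^`().[v].
Proof.
move=> yv noroot_yv rpv dpv; set q := p \Po - 'X.
have qE x : q.[x] = p.[- x] by rewrite /q horner_comp !hornerE.
have q'E x : q^`().[x] = - p^`().[- x].
  by rewrite /q deriv_comp !hornerE horner_comp !hornerE derivN derivX hornerN hornerC mulrN1.
have := @sgr_horner_right_simple_root q (- v) (- y).
rewrite !qE q'E !opprK sgrN; apply; rewrite ?ltrN2 ?oppr_eq0 //.
- move=> z; rewrite in_itv /= => /andP[z1 z2]; rewrite /root qE noroot_yv //.
  by rewrite in_itv /= lerNr z2 ltrNl.
- by rewrite /root qE opprK.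
Qed.

End SimpleRootSign.

Lemma num_real_roots_unique (R : idomainType) (h : {poly R}) (k k' : nat) :
  num_real_roots h k -> num_real_roots h k' -> k = k'.
Proof.
move=> [s [us hs <-]] [s' [us' hs' <-]]; apply: perm_size.
by apply: uniq_perm => // x; rewrite -hs -hs'.
Qed.

Lemma num_real_roots_count (R : rcfType) (p h : {poly R}) :
  h != 0 -> (forall x, root p x -> root h x) ->
  num_real_roots p (count (root p) (rootsR h)).
Proof.
move=> h0 ph; exists (filter (root p) (rootsR h)); split.
- exact/filter_uniq/uniq_roots.
- move=> x; rewrite mem_filter; case rpx: (root p x) => //=.
  by rewrite -(roots_on_rootsR h0 x) ph.
- exact: size_filter.
Qed.

Definition wronskian (R : comNzRingType) (p q : {poly R}) : {poly R} :=
  p^`() * q - p * q^`().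

Lemma scale_sub_X_deriv_poly (R : comNzRingType) (n s : nat) (p : {poly R}) :
  size p = s.+1 ->
  n%:R *: p - 'X * p^`() = \poly_(i < s.+1) ((n%:R - i%:R) * p`_i).
Proof.
move=> sp; apply/polyP => i; rewrite coef_poly coefB coefZ coefXM coef_deriv.
case: ltnP => hi.
  by case: i hi => [|i] _ /=; rewrite ?subr0 // -mulr_natr; ring.
by case: i hi => [//|i] hi /=; rewrite !nth_default ?sp // mulr0 mul0rn subrr.
Qed.

Section ScaleSubXDeriv.
Variables (R : numDomainType) (n s : nat) (p : {poly R}).
Hypotheses (size_p : size p = s.+1) (n_neq_s : n != s).

Let top_coef_neq0 : (n%:R - s%:R) * p`_s != 0 :> R.
Proof.
rewrite mulf_neq0 ?subr_eq0 ?eqr_nat //.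
by rewrite -[s]/(s.+1.-1) -size_p -lead_coefE lead_coef_eq0 -size_poly_eq0 size_p.
Qed.

Lemma size_scale_sub_X_deriv : size (n%:R *: p - 'X * p^`()) = s.+1.
Proof. by rewrite (scale_sub_X_deriv_poly n size_p) size_poly_eq. Qed.

Lemma lead_coef_scale_sub_X_deriv :
  lead_coef (n%:R *: p - 'X * p^`()) = (n%:R - s%:R) * lead_coef p.
Proof.
by rewrite (scale_sub_X_deriv_poly n size_p) lead_coef_poly // lead_coefE size_p.
Qed.

End ScaleSubXDeriv.

Lemma root_mul_cases (R : realDomainType) (p q : {poly R}) (b : R) :
    (root p b -> p^`().[b] != 0) -> (root q b -> q^`().[b] != 0) ->
    root (p * q) b ->
  (root p b && root q b) \/
  [/\ (p * q)^`().[b] != 0, (wronskian p q).[b] != 0 &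
      Num.sg (wronskian p q).[b] * Num.sg (p * q)^`().[b] = (root p b)%:R - (root q b)%:R].
Proof.
have sg_sqr (x : R) : x != 0 -> Num.sg x * Num.sg x = 1.
  by move=> x0; rewrite -expr2 sqr_sg x0.
move=> dp dq; rewrite rootM /wronskian derivM.
case rpb: (root p b); case rqb: (root q b) => //= _; [by left | right | right].
- have nz := mulf_neq0 (dp rpb) (negbT rqb).
  by rewrite !hornerE (rootP rpb) !(mul0r, addr0, subr0) nz sg_sqr ?subr0.
- have nz := mulf_neq0 (negbT rpb) (dq rqb).
  rewrite !hornerE (rootP rqb) !(mulr0, add0r, sub0r) oppr_eq0 nz.
  by rewrite sgrN mulNr sg_sqr ?sub0r.
Qed.

Section NegativeRegions.
Variables (R : rcfType) (n s : nat) (g : {poly R}) (xi : R).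
Hypotheses (s_gt0 : (0 < s)%N) (lt_s_n : (s < n)%N) (size_g : size g = s.+1).

Local Notation F := ('X^n + xi *: g).
Local Notation H := (F * g).
Local Notation W := (wronskian F g).

Lemma lead_coef_g_neq0 : lead_coef g != 0.
Proof. by rewrite lead_coef_eq0 -size_poly_eq0 size_g. Qed.

Lemma size_F : size F = n.+1.
Proof.
rewrite size_polyDl size_polyXn // (leq_ltn_trans (size_scale_leq _ _)) //.
by rewrite size_g ltnS.
Qed.

Lemma lead_coef_F : lead_coef F = 1.
Proof.
rewrite lead_coefDl ?lead_coefXn // size_polyXn (leq_ltn_trans (size_scale_leq _ _)) //.
by rewrite size_g ltnS.
Qed.

Lemma size_H : size H = (n + s).+1.
Proof.
by rewrite size_mul -?size_poly_eq0 ?size_F ?size_g // addSn addnS.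
Qed.

Lemma lead_coef_H : lead_coef H = lead_coef g.
Proof. by rewrite lead_coefM lead_coef_F mul1r. Qed.

Lemma H_neq0 : H != 0.
Proof. by rewrite -size_poly_eq0 size_H. Qed.

Lemma wronskian_F_g : W = 'X^(n.-1) * (n%:R *: g - 'X * g^`()).
Proof.
rewrite /wronskian derivD derivXn derivZ.
have -> : ('X^n : {poly R}) = 'X * 'X^(n.-1).
  by rewrite -exprS prednK // (leq_ltn_trans _ lt_s_n).
rewrite -mulr_natl -!mul_polyC; ring.
Qed.

Lemma size_W : size W = (n + s)%N.
Proof.
have n_neq_s : n != s by rewrite neq_ltn lt_s_n orbT.
have K0 : n%:R *: g - 'X * g^`() != 0.
  by rewrite -size_poly_eq0 (size_scale_sub_X_deriv size_g n_neq_s).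
rewrite wronskian_F_g size_mul ?K0 ?monic_neq0 ?monicXn //.
by rewrite size_polyXn (size_scale_sub_X_deriv size_g n_neq_s); lia.
Qed.

Lemma lead_coef_W : lead_coef W = (n%:R - s%:R) * lead_coef g.
Proof.
have n_neq_s : n != s by rewrite neq_ltn lt_s_n orbT.
rewrite wronskian_F_g lead_coefM lead_coefXn mul1r.
exact: lead_coef_scale_sub_X_deriv.
Qed.

Lemma W_neq0 : W != 0.
Proof. by rewrite -size_poly_eq0 size_W addn_eq0 negb_and -lt0n (leq_trans _ lt_s_n). Qed.

Lemma sgp_pinfty_W : sgp_pinfty W = sgp_pinfty H.
Proof.
by rewrite /sgp_pinfty lead_coef_W lead_coef_H sgrM gtr0_sg ?mul1r // subr_gt0 ltr_nat.
Qed.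

Lemma sgp_minfty_W : sgp_minfty W = - sgp_minfty H.
Proof.
rewrite /sgp_minfty size_W size_H lead_coef_W lead_coef_H -[(n + s)%N]prednK; last by lia.
by rewrite exprS !sgrM (gtr0_sg (_ : 0 < n%:R - s%:R)) ?subr_gt0 ?ltr_nat // sgrN1; ring.
Qed.

Hypotheses (sep_g : separable_poly g) (P_r_lt_xi : forall t, root (P_r n g) t -> t < xi).

Let size_g_le_n : (size g <= n)%N. Proof. by rewrite size_g. Qed.
Let n_gt0 : (0 < n)%N. Proof. exact: leq_ltn_trans (leq0n s) lt_s_n. Qed.
Let n_gt1 : (1 < n)%N. Proof. exact: leq_ltn_trans s_gt0 lt_s_n. Qed.

Lemma xi_gt0 : 0 < xi.
Proof.
apply/P_r_lt_xi/(root_P_r (a := 0) n_gt0 size_g_le_n).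
  by rewrite /root scale0r addr0 hornerXn expr0n eqn0Ngt n_gt0.
rewrite /root scale0r addr0 derivXn hornerMn hornerXn expr0n.
by case: (n) n_gt1 => [|[|m]] //; rewrite mul0rn.
Qed.

Lemma deriv_F_neq0 b : root F b -> F^`().[b] != 0.
Proof.
move=> rFb; apply/negP => /eqP dFb.
have := P_r_lt_xi (root_P_r n_gt0 size_g_le_n rFb (introT eqP dFb)).
by rewrite ltxx.
Qed.

(* At a critical point c of x |-> -x^n/g(x), the polynomial x^n + t g with
   t = -c^n/g(c) has the double root c, so t < xi and H(c) = g(c)^2 (xi - t). *)
Lemma H_ge0_at_root_W c : root W c -> 0 <= H.[c].
Proof.
move=> /rootP Wc; have [gc0|gc_neq0] := eqVneq g.[c] 0.
  by rewrite hornerM gc0 mulr0.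
pose t := - c ^+ n / g.[c].
have dF : (F^`()).[c] = c ^+ n.-1 *+ n + xi * g^`().[c].
  by rewrite derivD derivXn derivZ !hornerE hornerMn hornerXn.
have eW : c ^+ n.-1 *+ n * g.[c] = c ^+ n * g^`().[c].
  by move: Wc; rewrite /wronskian !hornerE dF; lra.
have t_lt_xi : t < xi.
  apply/P_r_lt_xi/(root_P_r n_gt0 size_g_le_n (a := c)).
    by rewrite /root !hornerE /t; apply/eqP; field.
  rewrite /root derivD derivXn derivZ !hornerE hornerMn hornerXn /t.
  by apply/eqP; rewrite -[_ *+ n](mulfK gc_neq0) eW; field.
have -> : H.[c] = g.[c] ^+ 2 * (xi - t) by rewrite !hornerE /t; field.
by rewrite ltW // mulr_gt0 ?subr_gt0 // exprn_even_gt0.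
Qed.

Lemma deriv_g_neq0 b : root g b -> g^`().[b] != 0.
Proof. by apply: coprimep_root; move: sep_g; rewrite separable_poly.unlock. Qed.

Lemma sgr_deriv_F_common_root b : root F b -> root g b ->
  Num.sg F^`().[b] = Num.sg g^`().[b].
Proof.
move=> /rootP rFb /rootP rgb.
have b0 : b = 0.
  by move: rFb; rewrite !hornerE rgb mulr0 addr0 => /eqP; rewrite expf_eq0 => /andP[_ /eqP].
rewrite derivD derivXn derivZ !hornerE hornerMn hornerXn b0 expr0n.
by case: (n) n_gt1 => [|[|m]] //; rewrite mul0rn add0r sgrM gtr0_sg ?xi_gt0 ?mul1r.
Qed.

Lemma H_gt0_around_common_root b y y' : root F b -> root g b -> y < b -> b < y' ->
    {in `[y, b[, forall z, ~~ root H z} -> {in `]b, y'], forall z, ~~ root H z} ->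
  0 < H.[y] /\ 0 < H.[y'].
Proof.
move=> rFb rgb yb by' nrH_l nrH_r.
have [nrF_l nrg_l] :
    {in `[y, b[, forall z, ~~ root F z} /\ {in `[y, b[, forall z, ~~ root g z}.
  by split=> z /nrH_l; rewrite rootM negb_or => /andP[].
have [nrF_r nrg_r] :
    {in `]b, y'], forall z, ~~ root F z} /\ {in `]b, y'], forall z, ~~ root g z}.
  by split=> z /nrH_r; rewrite rootM negb_or => /andP[].
have dFb := deriv_F_neq0 rFb; have dgb := deriv_g_neq0 rgb.
have sqr1 : Num.sg g^`().[b] * Num.sg g^`().[b] = 1 by rewrite -expr2 sqr_sg dgb.
rewrite -!(sgr_cp0 H.[_]) !hornerM !sgrM.
rewrite (sgr_horner_left_simple_root yb nrF_l) ?(sgr_horner_left_simple_root yb nrg_l) //.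
rewrite (sgr_horner_right_simple_root by' nrF_r) ?(sgr_horner_right_simple_root by' nrg_r) //.
by rewrite sgr_deriv_F_common_root // mulrNN sqr1 eqxx.
Qed.

Definition neg_wsign (y : R) : R := if H.[y] < 0 then Num.sg W.[y] else 0.

Lemma sgr_W_const u v : u <= v -> {in `[u, v], forall z, H.[z] < 0 \/ W.[z] != 0} ->
  Num.sg W.[u] = Num.sg W.[v].
Proof.
move=> uv HW; apply: (@polyrN0_itv _ `[u, v]); rewrite ?in_itv /= ?lexx ?uv //.
by move=> z /HW [Hz|//]; apply/negP => /H_ge0_at_root_W; rewrite leNgt Hz.
Qed.

Lemma neg_wsign_const u v : u <= v -> {in `[u, v], forall z, ~~ root H z} ->
  neg_wsign u = neg_wsign v.
Proof.
move=> uv nrH; have sgH := polyrN0_itv nrH.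
have [uI vI] : u \in `[u, v] /\ v \in `[u, v] by rewrite !in_itv /= !lexx uv.
rewrite /neg_wsign (_ : H.[u] < 0 = (H.[v] < 0)); last by rewrite -!sgr_cp0 (sgH v u).
case: ifP => // Hv.
by apply: sgr_W_const => // z zI; left; rewrite -sgr_cp0 (sgH v z) // sgr_cp0.
Qed.

Lemma neg_wsign_jump y b y' : y < b -> b < y' ->
    {in `[y, b[, forall z, ~~ root H z} -> {in `]b, y'], forall z, ~~ root H z} ->
  (root F b)%:R - (root g b)%:R = neg_wsign y - neg_wsign y'.
Proof.
move=> yb by' nrH_l nrH_r.
have [rHb|nrHb] := boolP (root H b); last first.
  move: (nrHb); rewrite rootM negb_or => /andP[/negPf-> /negPf->].
  rewrite subrr (@neg_wsign_const y y') ?subrr // ?ltW ?(lt_trans yb by') //.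
  move=> z; rewrite in_itv /= => /andP[yz zy']; case: (ltgtP z b) => [zb|bz|-> //].
  - by apply: nrH_l; rewrite in_itv /= yz zb.
  - by apply: nrH_r; rewrite in_itv /= bz zy'.
case: (root_mul_cases (@deriv_F_neq0 b) (@deriv_g_neq0 b) rHb).
  move=> /andP[rFb rgb].
  have [Hy Hy'] := H_gt0_around_common_root rFb rgb yb by' nrH_l nrH_r.
  by rewrite rFb rgb /neg_wsign !ltNge !ltW //= !subrr.
move=> [dHb Wb <-].
have sgHy := sgr_horner_left_simple_root yb nrH_l rHb dHb.
have sgHy' := sgr_horner_right_simple_root by' nrH_r rHb dHb.
have [yI y'I] : (y \in `[y, b[) /\ (y' \in `]b, y']) by rewrite !in_itv /= !lexx yb by'.
rewrite /neg_wsign -!(sgr_cp0 H.[_]) sgHy sgHy'.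
move: sgHy sgHy'; case: (sgrP H^`().[b]) dHb => // _ _ sgHy sgHy';
  rewrite ?opprK eqxx [1 == _]eq_sym eqNr oner_eq0 ?mulr1 ?mulrN1 ?subr0 ?sub0r;
  last congr (- _).
- symmetry; apply: sgr_W_const; rewrite ?ltW // => z; rewrite in_itv /= => /andP[yz zb].
  have [->|zb'] := eqVneq z b; [by right | left].
  have zb'' : z < b by rewrite lt_neqAle zb' zb.
  by rewrite -sgr_cp0 (polyrN0_itv nrH_l yI) ?sgHy ?in_itv /= ?yz ?zb''.
- apply: sgr_W_const; rewrite ?ltW // => z; rewrite in_itv /= => /andP[bz zy'].
  have [->|bz'] := eqVneq z b; [by right | left].
  have bz'' : b < z by rewrite lt_neqAle eq_sym bz' bz.
  by rewrite -sgr_cp0 (polyrN0_itv nrH_r y'I) ?sgHy' ?in_itv /= ?bz'' ?zy'.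
Qed.

Lemma neg_wsign_sweep (l : seq R) (a y' : R) :
    ~~ root H a -> path <%R a (rcons l y') ->
    (forall z, a < z -> root H z -> z \in l) ->
  (count (root F) l)%:R - (count (root g) l)%:R = neg_wsign a - neg_wsign y'.
Proof.
elim: l a => [|b l IH] a nrHa /=.
  rewrite andbT => ay' inl; rewrite subrr (@neg_wsign_const a y') ?subrr ?ltW //.
  move=> z; rewrite in_itv /= => /andP[az _]; have [<- //|az'] := eqVneq a z.
  by apply/negP => /(inl z); rewrite in_nil lt_neqAle az' az => /(_ isT).
move=> /andP[ab pl] inl.
have [c [bc pc]] : exists c, b < c /\ forall m, m < c -> path <%R m (rcons l y').
  case: l pl {IH inl} => [|c l] /=; rewrite ?andbT.
    by move=> by'; exists y'; split=> // m ->.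
  by move=> /andP[bc pc]; exists c; split=> // m ->.
pose m := (b + c) / 2; have [bm mc] : b < m /\ m < c by split; rewrite /m; lra.
have pm := pc m mc.
have m_lt_l : all (fun z => m < z) l.
  by move: (order_path_min lt_trans pm); rewrite all_rcons => /andP[].
have nrH_am z : a < z -> z <= m -> z != b -> ~~ root H z.
  move=> az zm zb; apply/negP => /(inl z az); rewrite in_cons (negPf zb) /=.
  by move=> /(allP m_lt_l); rewrite ltNge zm.
rewrite /= !natrD opprD addrACA (IH m) ?(@neg_wsign_jump a b m) //.
  by rewrite addrA subrK.
- move=> z; rewrite in_itv /= => /andP[az zb]; have [<- //|az'] := eqVneq a z.
  by rewrite nrH_am ?lt_neqAle ?az' ?az ?(ltW (lt_le_trans zb (ltW bm))) ?lt_eqF.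
- move=> z; rewrite in_itv /= => /andP[bz zm].
  by rewrite nrH_am ?(lt_trans ab bz) ?gt_eqF.
- by rewrite nrH_am ?(lt_trans ab bm) ?gt_eqF ?lexx.
- move=> z mz rz; have := inl z (lt_trans ab (lt_trans bm mz)) rz.
  by rewrite in_cons gt_eqF ?(lt_trans bm mz).
Qed.

Lemma neg_wsign_minfty : neg_wsign (- cauchy_bound H) = (sgp_minfty H == -1)%:R.
Proof.
pose a := Num.min (- cauchy_bound H) (- cauchy_bound W).
have aH : a \in `]-oo, - cauchy_bound H] by rewrite in_itv /= ge_min lexx.
have aW : a \in `]-oo, - cauchy_bound W] by rewrite in_itv /= ge_min lexx orbT.
rewrite -(@neg_wsign_const a) ?ge_min ?lexx //; last first.
  move=> z; rewrite in_itv /= => /andP[_ zH].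
  by apply: le_cauchy_bound H_neq0 _ _; rewrite in_itv.
rewrite /neg_wsign -sgr_cp0 (sgp_minftyP (le_cauchy_bound H_neq0) aH).
rewrite (sgp_minftyP (le_cauchy_bound W_neq0) aW) sgp_minfty_W.
by case: eqP => [->|]; rewrite ?opprK.
Qed.

Lemma neg_wsign_pinfty : neg_wsign (cauchy_bound H) = - (sgp_pinfty H == -1)%:R.
Proof.
pose b := Num.max (cauchy_bound H) (cauchy_bound W).
have bH : b \in `[cauchy_bound H, +oo[ by rewrite in_itv /= le_max lexx.
have bW : b \in `[cauchy_bound W, +oo[ by rewrite in_itv /= le_max lexx orbT.
rewrite (@neg_wsign_const _ b) ?le_max ?lexx //; last first.
  move=> z; rewrite in_itv /= => /andP[Hz _].
  by apply: ge_cauchy_bound H_neq0 _ _; rewrite in_itv /= Hz.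
rewrite /neg_wsign -sgr_cp0 (sgp_pinftyP (ge_cauchy_bound H_neq0) bH).
rewrite (sgp_pinftyP (ge_cauchy_bound W_neq0) bW) sgp_pinfty_W.
by case: eqP => [->|]; rewrite ?oppr0.
Qed.

Lemma count_roots_F_sub_g :
  (count (root F) (rootsR H))%:R - (count (root g) (rootsR H))%:R =
    (sgp_minfty H == -1)%:R + (sgp_pinfty H == -1)%:R :> R.
Proof.
rewrite (@neg_wsign_sweep _ (- cauchy_bound H) (cauchy_bound H)).
- by rewrite neg_wsign_minfty neg_wsign_pinfty opprK.
- by apply: le_cauchy_bound H_neq0 _ _; rewrite in_itv /= lexx.
- have cH_gt0 := cauchy_bound_gt0 H.
  by rewrite rcons_path path_roots last_roots_le //; lra.
- by move=> z _ rz; rewrite -(roots_on_rootsR H_neq0 z) rz.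
Qed.

Lemma sgp_minfty_H_eqN1 : (sgp_minfty H == -1) = odd (n - s) (+) (lead_coef g < 0).
Proof.
have -> : odd (n - s) = odd (n + s) by rewrite oddB ?oddD // ltnW.
rewrite /sgp_minfty size_H lead_coef_H /= sgrM -signr_odd.
case: (odd _); case: (sgrP (lead_coef g)) lead_coef_g_neq0 => //= _ _;
  by rewrite ?(expr1, expr0, sgrN1, sgr1, mulr1, mul1r, mulrNN, eqxx) // eq_sym eqNr oner_eq0.
Qed.

Lemma count_roots_F : count (root F) (rootsR H) =
  (count (root g) (rootsR H)
     + (odd (n - s) (+) (lead_coef g < 0)%R) + (lead_coef g < 0)%R)%N.
Proof.
rewrite -sgp_minfty_H_eqN1 -[lead_coef g < 0]sgr_cp0 -lead_coef_H.
apply/eqP; rewrite -(eqr_nat R) !natrD.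
by rewrite -addrA -count_roots_F_sub_g subrKC.
Qed.

End NegativeRegions.

Theorem theorem5p2 (R : rcfType) (n s gamma : nat) (g : {poly R}) :
  (1 <= s)%N -> (s < n)%N ->
  size g = s.+1 ->
  separable_poly g ->
  num_real_roots g gamma ->
  forall xi : R, (forall a : R, root (P_r n g) a -> a < xi) ->
  num_real_roots ('X^n + xi *: g)
    (if odd (n - s) then gamma.+1
     else if 0 < lead_coef g then gamma else gamma.+2).
Proof.
move=> s_gt0 lt_s_n size_g sep_g g_roots xi P_r_lt_xi.
set F := 'X^n + xi *: g.
have H0 : F * g != 0 := H_neq0 xi lt_s_n size_g.
have F_roots x : root F x -> root (F * g) x by rewrite rootM => ->.
have g_roots' x : root g x -> root (F * g) x by rewrite rootM orbC => ->.
have := num_real_roots_count H0 F_roots.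
rewrite (count_roots_F s_gt0 lt_s_n size_g sep_g P_r_lt_xi).
rewrite -(num_real_roots_unique g_roots (num_real_roots_count H0 g_roots')).
case: (odd _); case: (sgrP (lead_coef g)) (lead_coef_g_neq0 size_g) => //= _ _;
  by rewrite ?addn0 ?addn1.
Qed.
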